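(* For every profile $P$: $|\mathit{TC}(P)|=2$ if and only if all but two agents have distinct top choices (there are distinct agents $x,y$ with the same top choice $p$, and the top choices of the agents in $N\setminus\{y\}$ are pairwise distinct) and these two agents $x,y$ also share the same second-best house $q$, which is not top-ranked by any agent. Analogously, $|\mathit{BC}(P)|=2$ if and only if all but two agents have distinct bottom choices (there are distinct agents $x,y$ with the same last-ranked house $p$, and the last-ranked houses of the agents in $N\setminus\{y\}$ are pairwise distinct) and these two agents share the same second-worst house $q$, which is not bottom-ranked by any agent.
   Context: Let $N=\{1,\dots,n\}$ be agents and $H$ a set of $n$ houses. A profile $P=(\succ_1,\dots,\succ_n)$ gives each agent a strict linear order on $H$; an agent's top (bottom) choice is the house she ranks first (last). An assignment is a bijection $N\to H$; $M$ is the set of assignments. Agent $x$ weakly prefers $\mu$ to $\lambda$ if $\mu(x)\succ_x\lambda(x)$ or $\mu(x)=\lambda(x)$. $N_{\mu,\lambda}$ is the set of agents weakly preferring $\mu$ to $\lambda$; $\mu\succsim\lambda$ if $|N_{\mu,\lambda}|\ge|N_{\lambda,\mu}|$, and $\succsim^*$ is its transitive closure. $\mathit{TC}(P)=\{\mu\in M:\mu\succsim^*\lambda\ \forall\lambda\in M\}$, $\mathit{BC}(P)=\{\mu\in M:\lambda\succsim^*\mu\ \forall\lambda\in M\}$. *)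

From mathcomp Require Import all_boot all_order.
Set Implicit Arguments. Unset Strict Implicit. Unset Printing Implicit Defensive.

(* Agents are 'I_n; houses form a finite type H with #|H| = n.
   A profile P assigns to each agent x a relation P x on H, where
   P x a b means  a ≻_x b. *)

Section Defs.
Variables (n : nat) (H : finType).

Definition strict_linear_order (r : rel H) : Prop :=
  [/\ irreflexive r, transitive r & forall a b, a != b -> r a b || r b a].

Definition profile := 'I_n -> rel H.

Definition is_profile (P : profile) : Prop :=
  forall x, strict_linear_order (P x).

Definition top_choice (P : profile) (x : 'I_n) (p : H) : Prop :=
  forall h, h != p -> P x p h.

Definition bottom_choice (P : profile) (x : 'I_n) (p : H) : Prop :=
  forall h, h != p -> P x h p.

Definition second_best (P : profile) (x : 'I_n) (q : H) : Prop :=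
  exists p, [/\ top_choice P x p, q != p &
                forall h, h != p -> h != q -> P x q h].

Definition second_worst (P : profile) (x : 'I_n) (q : H) : Prop :=
  exists p, [/\ bottom_choice P x p, q != p &
                forall h, h != p -> h != q -> P x h q].

(* assignments: bijections N -> H (with #|H| = n, injective = bijective) *)
Definition is_assignment (mu : {ffun 'I_n -> H}) : bool :=
  injectiveb mu && (#|H| == n).

Definition weakly_prefers (P : profile) (x : 'I_n) (mu lam : {ffun 'I_n -> H}) : bool :=
  P x (mu x) (lam x) || (mu x == lam x).

Definition N_of (P : profile) (mu lam : {ffun 'I_n -> H}) : {set 'I_n} :=
  [set x | weakly_prefers P x mu lam].

Definition majority (P : profile) : rel {ffun 'I_n -> H} :=
  fun mu lam => [&& is_assignment mu, is_assignment lam &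
                    #|N_of P lam mu| <= #|N_of P mu lam|].

(* transitive closure of ≿ on M *)
Definition majority_tc (P : profile) (mu lam : {ffun 'I_n -> H}) : bool :=
  [exists nu, majority P mu nu && connect (majority P) nu lam].

Definition TC (P : profile) : {set {ffun 'I_n -> H}} :=
  [set mu | is_assignment mu &&
     [forall lam, is_assignment lam ==> majority_tc P mu lam]].

Definition BC (P : profile) : {set {ffun 'I_n -> H}} :=
  [set mu | is_assignment mu &&
     [forall lam, is_assignment lam ==> majority_tc P lam mu]].

End Defs.

From mathcomp Require Import all_boot all_order perm.
Set Implicit Arguments. Unset Strict Implicit. Unset Printing Implicit Defensive.

(* Majority comparison is complete on assignments, so the top cycle is the set
   of assignments from which every assignment can be reached, and it is closed
   under being weakly beaten.  Hence |TC| = 2 exactly when two distinct tied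
   assignments mu, lam are weakly beaten by nothing else.  If an agent y
   prefers the house of w to her own under mu, swapping the houses of y and w
   weakly beats mu, so the swap is lam; this makes y unique, gives every other
   agent her top house under mu, makes the house of w the top of y and the
   house of y her second best.  Applying the same to lam yields the condition.
   Conversely, giving every agent other than y her top house and giving q to y
   yields an assignment that ties with the swap of x and y, and nothing else
   weakly beats either of them.  Bottom cycles are top cycles of the reversed
   profile. *)

Section StrictLinearOrder.
Variables (T : finType) (r : rel T).
Hypothesis r_slo : strict_linear_order r.

Lemma slo_irr a : r a a = false.
Proof. by case: r_slo => irr _ _; apply: irr. Qed.

Lemma slo_trans a b c : r a b -> r b c -> r a c.
Proof. by case: r_slo => _ tr _ /tr; apply. Qed.

Lemma slo_asym a b : r a b -> r b a = false.
Proof. by move=> rab; apply/negbTE/negP => /(slo_trans rab); rewrite slo_irr. Qed.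

Lemma slo_total a b : a != b -> r a b || r b a.
Proof. by case: r_slo => _ _; apply. Qed.

Lemma slo_or_eqNr a b : r a b || (a == b) = ~~ r b a.
Proof.
case: (eqVneq a b) => [->|ab]; first by rewrite slo_irr orbT.
by case/orP: (slo_total ab) => rab; rewrite rab ?(slo_asym rab).
Qed.

Lemma slo_max_exists (h0 : T) : exists p, forall h, h != p -> r p h.
Proof.
pose beaten p := [set h | r p h].
have [p _ p_max] := @arg_maxnP T h0 xpredT (fun p => #|beaten p|) erefl.
exists p => h hp; rewrite -[r p h]negbK -slo_or_eqNr (negbTE hp) orbF.
apply/negP => rhp; have := p_max h isT; apply/negP; rewrite -ltnNge.
have p_beaten : p \notin beaten p by rewrite inE slo_irr.
have := cardsU1 p (beaten p); rewrite p_beaten add1n => <-.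
apply/subset_leq_card/subsetP => z.
by rewrite !inE => /predU1P[->|/(slo_trans rhp)].
Qed.

End StrictLinearOrder.

Section TopCycle.
Variables (U : finType) (R : rel U) (A : pred U).
Hypotheses (R_dom : forall a b, R a b -> A a && A b)
  (R_refl : {in A, reflexive R}) (R_total : {in A &, total R}).

Lemma step_connect_refl a b :
  R a a -> [exists c, R a c && connect R c b] = connect R a b.
Proof.
move=> Raa; apply/existsP/idP => [[c /andP[Rac Ccb]]|Cab].
  exact: connect_trans (connect1 Rac) Ccb.
by exists a; rewrite Raa.
Qed.

Lemma connect_back_closed (S : pred U) :
  (forall a b, R a b -> S b -> S a) -> forall a b, connect R a b -> S b -> S a.
Proof.
move=> S_closed a b /connectP[p Rp ->] {b}.
by elim: p a Rp => [|c p IHp] a //= /andP[/S_closed Sca /IHp Sp /Sp /Sca].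
Qed.

(* Spelled as [TC], so that [TC P] is convertible to
   [top_cycle (majority P) is_assignment]. *)
Definition top_cycle : {set U} :=
  [set a | A a && [forall b, A b ==> [exists c, R a c && connect R c b]]].

Lemma in_top_cycle a :
  (a \in top_cycle) = A a && [forall b, A b ==> connect R a b].
Proof.
rewrite inE; case Aa: (A a) => //=.
by apply: eq_forallb => b; rewrite step_connect_refl ?R_refl.
Qed.

Lemma top_cycle_back_closed a b : R a b -> b \in top_cycle -> a \in top_cycle.
Proof.
move=> Rab; rewrite !in_top_cycle => /andP[_ /forallP Cb].
case/andP: (R_dom Rab) => -> _ /=; apply/forallP => c.
by apply/implyP => /(implyP (Cb c)); apply: connect_trans (connect1 Rab).
Qed.

Lemma top_cycle_pair_rel a b : top_cycle = [set a; b] -> R a b.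
Proof.
move=> Tab; have Ta : a \in top_cycle by rewrite Tab !inE eqxx.
have Tb : b \in top_cycle by rewrite Tab !inE eqxx orbT.
apply/contraT => nRab.
have b_closed c d : R c d -> d == b -> c == b.
  move=> Rcd /eqP dE; subst d; have := top_cycle_back_closed Rcd Tb.
  by rewrite Tab !inE => /orP[/eqP cE|//]; move: Rcd; rewrite cE (negbTE nRab).
move: Ta Tb; rewrite !in_top_cycle => /andP[_ /forallP/(_ b) /implyP Cab].
case/andP=> Ab _; have /eqP ab := connect_back_closed b_closed (Cab Ab) (eqxx b).
by rewrite ab R_refl in nRab.
Qed.

Definition unbeaten_tie a b := [/\ a != b, R a b, R b a &
  forall c, R c a || R c b -> (c == a) || (c == b)].

Lemma card_top_cycle2 : #|top_cycle| = 2 <-> exists a b, unbeaten_tie a b.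
Proof.
split=> [/eqP/cards2P[a [b [ab Tab]]]|[a [b [ab Rab Rba ab_closed]]]].
  exists a, b; split=> //; first exact: top_cycle_pair_rel.
    by apply: top_cycle_pair_rel; rewrite setUC.
  move=> c /orP[] /top_cycle_back_closed; rewrite Tab !inE; apply.
    by rewrite eqxx.
  by rewrite eqxx orbT.
case/andP: (R_dom Rab) => Aa Ab.
apply/eqP/cards2P; exists a, b; split=> //; apply/setP => c.
have pair_closed d e : R d e -> e \in [set a; b] -> d \in [set a; b].
  by move=> Rde; rewrite !inE => /orP[]/eqP eE; apply: ab_closed; rewrite -eE Rde ?orbT.
apply/idP/idP => [|c_ab]; rewrite in_top_cycle.
  case/andP=> _ /forallP/(_ a); rewrite Aa /= => Cca.
  have := connect_back_closed (S := fun e => e \in [set a; b]) pair_closed Cca.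
  by apply; rewrite !inE eqxx.
have pair_connect d e : d \in [set a; b] -> e \in [set a; b] -> connect R d e.
  by rewrite !inE; do 2![case/orP=> /eqP->]; rewrite ?connect0 ?connect1.
have Ac : A c by move: c_ab; rewrite !inE => /orP[]/eqP->.
rewrite Ac; apply/forallP => d; apply/implyP => Ad.
case/orP: (R_total Ac Ad) => [/connect1 //|/pair_closed Rdc].
exact: pair_connect c_ab (Rdc c_ab).
Qed.

End TopCycle.

Section Profile.
Variables (n : nat) (H : finType) (P : profile n H).
Implicit Types (mu nu lam : {ffun 'I_n -> H}) (B C : {set 'I_n}) (x y z w : 'I_n)
  (h p q : H).

Local Notation A := (@is_assignment n H).
Local Notation R := (majority P).

Lemma majority_assignment mu nu : R mu nu -> A mu && A nu.
Proof. by case/and3P=> -> ->. Qed.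

Lemma majority_refl : {in A, reflexive R}.
Proof. by move=> mu Amu; apply/and3P. Qed.

Lemma majority_total : {in A &, total R}.
Proof.
by move=> mu nu Amu Anu; rewrite /majority (Amu : A mu) (Anu : A nu) leq_total.
Qed.

Lemma card_agents_setC1 x : #|[set~ x]| = n.-1.
Proof. by rewrite cardsC1 card_ord. Qed.

Lemma card_le_notin_setC1 B C y w :
  y \notin B -> {subset [set~ w] <= C} -> #|B| <= #|C|.
Proof.
move=> yB wC; apply: (@leq_trans n.-1).
  rewrite -(card_agents_setC1 y); apply/subset_leq_card/subsetP => z zB.
  by rewrite in_setC1; apply: contraNneq yB => <-.
by rewrite -(card_agents_setC1 w); apply/subset_leq_card/subsetP.
Qed.

Lemma card_lt_notin B y : y \notin B -> #|B| < n.
Proof.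
move=> yB; rewrite -[X in _ < X]card_ord -cardsT; apply/proper_card.
by rewrite properT; apply: contraNneq yB => ->; rewrite inE.
Qed.

Lemma setT_of_card B : n <= #|B| -> B = setT.
Proof. by move=> nB; apply/eqP; rewrite eqEcard subsetT cardsT card_ord. Qed.

Lemma setC1_of_card B x : x \notin B -> n.-1 <= #|B| -> B = [set~ x].
Proof.
move=> xB nB; apply/eqP; rewrite eqEcard card_agents_setC1 nB andbT.
by apply/subsetP => z zB; rewrite in_setC1; apply: contraNneq xB => <-.
Qed.

Hypotheses (card_H : #|H| = n) (P_slo : is_profile P).

Lemma top_choice_uniq z p p' : top_choice P z p -> top_choice P z p' -> p = p'.
Proof.
move=> top_p top_p'; apply/eqP/contraT => pp'.
by rewrite eq_sym in pp'; rewrite -(slo_asym (P_slo z) (top_p _ pp')) top_p' 1?eq_sym.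
Qed.

Lemma top_choice_no_gain z p h : top_choice P z p -> P z h p = false.
Proof.
move=> top_p; case: (eqVneq h p) => [->|hp]; first exact: (slo_irr (P_slo z)).
exact: (slo_asym (P_slo z) (top_p h hp)).
Qed.

Lemma no_gain_top_choice z p : (forall h, P z h p = false) -> top_choice P z p.
Proof.
move=> no_gain h hp.
by case/orP: (slo_total (P_slo z) hp) => [|//]; rewrite no_gain.
Qed.

Lemma unique_gain_top_second y p q :
  P y p q -> (forall h, P y h q -> h = p) -> top_choice P y p /\ second_best P y q.
Proof.
move=> Pypq gain_p.
have gain_other h : h != p -> h != q -> P y q h.
  move=> hp hq; rewrite eq_sym in hq.
  case/orP: (slo_total (P_slo y) hq) => // /gain_p hpE.
  by rewrite hpE eqxx in hp.
have top_p : top_choice P y p.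
  move=> h hp; case/orP: (slo_total (P_slo y) hp) => [Pyhp|//].
  by have := gain_p h (slo_trans (P_slo y) Pyhp Pypq); move/eqP: hp.
split=> //; exists p; split=> //.
by apply: contraTneq Pypq => ->; rewrite (slo_irr (P_slo y)).
Qed.

Lemma second_best_gain y q h : second_best P y q -> P y h q -> top_choice P y h.
Proof.
case=> p [top_p qp q_second] Pyhq.
suff -> : h = p by [].
apply/eqP/contraT => hp; have hq : h != q.
  by apply: contraTneq Pyhq => ->; rewrite (slo_irr (P_slo y)).
by rewrite (slo_asym (P_slo y) (q_second h hp hq)) in Pyhq.
Qed.

Lemma assignment_inj mu : A mu -> injective mu.
Proof. by case/andP=> /injectiveP. Qed.

Lemma assignment_surj mu h : A mu -> exists w, mu w = h.
Proof.
move=> Amu; have /codomP[w ->] : h \in codom mu.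
  by apply: inj_card_onto (assignment_inj Amu) _ _; rewrite card_ord card_H.
by exists w.
Qed.

Definition swap mu x y : {ffun 'I_n -> H} := [ffun z => mu (tperm x y z)].

Lemma swap_assignment mu x y : A mu -> A (swap mu x y).
Proof.
move=> Amu; rewrite /is_assignment card_H eqxx andbT; apply/injectiveP => z z'.
by rewrite !ffunE => /(assignment_inj Amu) /perm_inj.
Qed.

Lemma swapK mu x y : swap (swap mu x y) y x = mu.
Proof. by apply/ffunP => z; rewrite !ffunE tpermC tpermK. Qed.

Lemma swap_of_agree mu nu x y : A mu -> A nu -> nu y = mu x ->
  (forall z, z != x -> z != y -> nu z = mu z) -> nu = swap mu y x.
Proof.
move=> Amu Anu nuy nu_agree.
have nux : nu x = mu y.
  have [v muv] := assignment_surj (nu x) Amu.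
  case: (eqVneq v y) => [<-//|vy]; case: (eqVneq v x) => [vx|vx].
    move: muv; rewrite vx -nuy => /(assignment_inj Anu) yx.
    by rewrite vx yx eqxx in vy.
  move: muv; rewrite -nu_agree // => /(assignment_inj Anu) vE.
  by rewrite vE eqxx in vx.
apply/ffunP => z; rewrite ffunE; case: tpermP => [->|->|/eqP zy /eqP zx] //.
exact: nu_agree.
Qed.

Lemma in_N_of mu nu z : (z \in N_of P mu nu) = ~~ P z (nu z) (mu z).
Proof. by rewrite inE /weakly_prefers slo_or_eqNr. Qed.

Lemma N_of_agree mu nu z : mu z = nu z -> z \in N_of P mu nu.
Proof. by move=> muz; rewrite in_N_of muz (slo_irr (P_slo z)). Qed.

Lemma N_of_antisym mu nu z :
  z \in N_of P mu nu -> z \in N_of P nu mu -> mu z = nu z.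
Proof.
rewrite !in_N_of => Nmu Nnu; apply/eqP/contraT => /(slo_total (P_slo z)).
by rewrite (negbTE Nmu) (negbTE Nnu).
Qed.

Lemma majority_no_gain_eq mu nu :
  (forall z, ~~ P z (nu z) (mu z)) -> R nu mu -> nu = mu.
Proof.
move=> no_gain /and3P[_ _ le_mu_nu].
have N_mu : N_of P mu nu = setT by apply/setP => z; rewrite in_N_of no_gain inE.
have N_nu : N_of P nu mu = setT.
  by apply: setT_of_card; move: le_mu_nu; rewrite N_mu cardsT card_ord.
by apply/ffunP => z; apply: N_of_antisym; rewrite ?N_mu ?N_nu inE.
Qed.

Lemma majority_swap_gain mu y w :
  A mu -> P y (mu w) (mu y) -> R (swap mu y w) mu.
Proof.
move=> Amu gain; rewrite /majority swap_assignment // (Amu : A mu) /=.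
apply: (card_le_notin_setC1 (y := y) (w := w)).
  by rewrite in_N_of ffunE tpermL gain.
move=> z; rewrite in_setC1 in_N_of ffunE => zw.
case: tpermP => [->|zE|_ _]; first by rewrite (slo_asym (P_slo y) gain).
  by rewrite zE eqxx in zw.
by rewrite (slo_irr (P_slo z)).
Qed.

Lemma majority_swap_mutual_gain mu y w :
  P y (mu w) (mu y) -> P w (mu y) (mu w) -> R mu (swap mu y w) = false.
Proof.
move=> gain_y gain_w; apply/negbTE/negP => /and3P[_ _]; apply/negP.
have -> : N_of P (swap mu y w) mu = setT.
  apply/setP => z; rewrite in_N_of inE ffunE.
  case: tpermP => [->|->|_ _]; rewrite ?(slo_asym (P_slo _) gain_y) //.
    by rewrite (slo_asym (P_slo _) gain_w).
  by rewrite (slo_irr (P_slo z)).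
rewrite -ltnNge cardsT card_ord; apply: (card_lt_notin (y := y)).
by rewrite in_N_of ffunE tpermL gain_y.
Qed.

Lemma majority_swap_tie mu x y : A mu -> P x (mu x) (mu y) -> P y (mu x) (mu y) ->
  R mu (swap mu y x) && R (swap mu y x) mu.
Proof.
move=> Amu pref_x pref_y; set lam := swap mu y x.
have x_notin : x \notin N_of P lam mu by rewrite in_N_of ffunE tpermR pref_x.
have y_notin : y \notin N_of P mu lam by rewrite in_N_of ffunE tpermL pref_y.
have others_agree z : z != x -> z != y -> mu z = lam z.
  by move=> zx zy; rewrite ffunE tpermD // eq_sym.
have N_mu : {subset [set~ y] <= N_of P mu lam}.
  move=> z; rewrite in_setC1 => zy; case: (eqVneq z x) => [->|zx].
    by rewrite in_N_of ffunE tpermR (slo_asym (P_slo x) pref_x).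
  by rewrite N_of_agree ?others_agree.
have N_lam : {subset [set~ x] <= N_of P lam mu}.
  move=> z; rewrite in_setC1 => zx; case: (eqVneq z y) => [->|zy].
    by rewrite in_N_of ffunE tpermL (slo_asym (P_slo y) pref_y).
  by rewrite N_of_agree ?others_agree.
rewrite /majority swap_assignment // (Amu : A mu) /=.
by rewrite (card_le_notin_setC1 x_notin N_mu) (card_le_notin_setC1 y_notin N_lam).
Qed.

Section TiedPair.
Variables mu lam : {ffun 'I_n -> H}.
Hypotheses (Amu : A mu) (mu_neq_lam : mu != lam)
  (R_mu_lam : R mu lam) (R_lam_mu : R lam mu)
  (beats_mu : forall nu, R nu mu -> (nu == mu) || (nu == lam)).

Lemma tied_pair_gain : exists y, P y (lam y) (mu y).
Proof.
case: (pickP (fun y => P y (lam y) (mu y))) => [y gain|no_gain]; first by exists y.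
case/eqP: mu_neq_lam; symmetry; apply: majority_no_gain_eq R_lam_mu => z.
by rewrite no_gain.
Qed.

Lemma tied_pair_swap y w : P y (mu w) (mu y) -> lam = swap mu y w.
Proof.
move=> gain; case/orP: (beats_mu (majority_swap_gain Amu gain)) => /eqP // swapE.
move/(congr1 (fun nu : {ffun 'I_n -> H} => nu y)): swapE.
by rewrite ffunE tpermL => muw; rewrite muw (slo_irr (P_slo y)) in gain.
Qed.

Lemma tied_pair_unique_gain y z h h' :
  P y h (mu y) -> P z h' (mu z) -> z = y /\ h' = h.
Proof.
have [w <-] := assignment_surj h Amu; have [w' <-] := assignment_surj h' Amu.
move=> gain_y gain_z.
move/(congr1 (fun nu : {ffun 'I_n -> H} => nu z)): (tied_pair_swap gain_z).
rewrite (tied_pair_swap gain_y) !ffunE tpermL.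
case: tpermP => [->|zw|_ _] /(assignment_inj Amu) w'E.
- by rewrite w'E.
- (* y and w would both gain by trading houses, so lam would beat mu strictly *)
  subst z w'; move: R_mu_lam.
  by rewrite (tied_pair_swap gain_y) (majority_swap_mutual_gain gain_y gain_z).
- by rewrite -w'E (slo_irr (P_slo z)) in gain_z.
Qed.

Lemma tied_pair_structure : exists y w, [/\ y != w, lam = swap mu y w,
  forall z, z != y -> top_choice P z (mu z), top_choice P y (mu w) &
  second_best P y (mu y)].
Proof.
have [y gain] := tied_pair_gain; have [w muw] := assignment_surj (lam y) Amu.
rewrite -muw in gain.
have yw : y != w by apply: contraTneq gain => <-; rewrite (slo_irr (P_slo y)).
have [top_y second_y] : top_choice P y (mu w) /\ second_best P y (mu y).
  by apply: (unique_gain_top_second gain) => h /(tied_pair_unique_gain gain) [].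
exists y, w; split=> // [|z zy]; first exact: tied_pair_swap.
apply: no_gain_top_choice => h; apply/negP => /(tied_pair_unique_gain gain) [zE _].
by rewrite zE eqxx in zy.
Qed.

End TiedPair.

Section TopAndSecondBest.
Variables (mu : {ffun 'I_n -> H}) (x y : 'I_n).
Hypotheses (Amu : A mu) (xy : x != y)
  (top_others : forall z, z != y -> top_choice P z (mu z))
  (top_y : top_choice P y (mu x)) (second_y : second_best P y (mu y)).

Lemma majority_tie_swap : R mu (swap mu y x) && R (swap mu y x) mu.
Proof.
have muyx : mu y != mu x by apply: contra_neq xy => /(assignment_inj Amu).
by apply: majority_swap_tie => //; [apply: top_others xy _ muyx | apply: top_y _ muyx].
Qed.

Lemma majority_beaters nu : R nu mu -> nu = mu \/ nu = swap mu y x.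
Proof.
move=> R_nu_mu; have /andP[Anu _] := majority_assignment R_nu_mu.
have others_no_gain z : z != y -> P z (nu z) (mu z) = false.
  by move/top_others/top_choice_no_gain.
case: (boolP (P y (nu y) (mu y))) => [gain|no_gain]; last first.
  left; apply: majority_no_gain_eq R_nu_mu => z.
  by case: (eqVneq z y) => [->//|/others_no_gain ->].
right; have nuy : nu y = mu x.
  exact: top_choice_uniq (second_best_gain second_y gain) top_y.
have x_loses : x \notin N_of P nu mu.
  rewrite in_N_of negbK; apply: (top_others xy); rewrite -nuy.
  by apply: contra_neq xy => /(assignment_inj Anu).
have N_mu : {subset [set~ y] <= N_of P mu nu}.
  by move=> z; rewrite in_setC1 in_N_of => /others_no_gain ->.
have N_nu : N_of P nu mu = [set~ x].
  apply: setC1_of_card x_loses _; case/and3P: R_nu_mu => _ _; apply: leq_trans.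
  by rewrite -(card_agents_setC1 y); apply/subset_leq_card/subsetP.
apply: swap_of_agree => // z zx zy; apply/esym/N_of_antisym.
  by apply: N_mu; rewrite in_setC1.
by rewrite N_nu in_setC1.
Qed.

End TopAndSecondBest.

Definition shared_top_and_second : Prop :=
  exists (x y : 'I_n) (p q : H),
       [/\ x != y, top_choice P x p, top_choice P y p &
           (forall (a b : 'I_n) (h : H), a != y -> b != y -> a != b ->
              top_choice P a h -> ~ top_choice P b h)] /\
       [/\ second_best P x q, second_best P y q &
           forall z : 'I_n, ~ top_choice P z q].

Lemma shared_top_and_second_of_unbeaten_tie mu lam :
  unbeaten_tie R mu lam -> shared_top_and_second.
Proof.
case=> mu_lam R_mu_lam R_lam_mu beaters.
have /andP[Amu Alam] := majority_assignment R_mu_lam.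
have lam_mu : lam != mu by rewrite eq_sym.
have beats_mu nu : R nu mu -> (nu == mu) || (nu == lam).
  by move=> R_nu; rewrite beaters // R_nu.
have beats_lam nu : R nu lam -> (nu == lam) || (nu == mu).
  by move=> R_nu; rewrite orbC beaters // R_nu orbT.
have [y [w [yw lamE top_mu top_y second_y]]] :=
  tied_pair_structure Amu mu_lam R_mu_lam R_lam_mu beats_mu.
have [y' [_ [_ _ top_lam _ second_y']]] :=
  tied_pair_structure Alam lam_mu R_lam_mu R_mu_lam beats_lam.
have wy : w != y by rewrite eq_sym.
have lamw : lam w = mu y by rewrite lamE ffunE tpermR.
have y'E : y' = w.
  apply/eqP/contraT; rewrite eq_sym => wy'.
  have := top_choice_uniq (top_lam w wy') (top_mu w wy).
  by rewrite lamw => /(assignment_inj Amu) yE; rewrite yE eqxx in yw.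
subst y'; rewrite lamw in second_y'.
exists w, y, (mu w), (mu y); split; split=> //.
- exact: top_mu.
- move=> a b h ay by_ ab top_a top_b; move/eqP: ab; apply; apply: (assignment_inj Amu).
  rewrite -(top_choice_uniq top_a (top_mu a ay)).
  exact: top_choice_uniq top_b (top_mu b by_).
- move=> z top_z; case: (eqVneq z y) => [zy|zy].
    subst z; have /(assignment_inj Amu) wE := top_choice_uniq top_y top_z.
    by rewrite wE eqxx in wy.
  have /(assignment_inj Amu) zE := top_choice_uniq (top_mu z zy) top_z.
  by rewrite zE eqxx in zy.
Qed.

Lemma assignment_of_tops y q :
  (forall a b h, a != y -> b != y -> a != b ->
     top_choice P a h -> ~ top_choice P b h) ->
  (forall z, ~ top_choice P z q) ->
  exists2 mu, A mu & mu y = q /\ forall z, z != y -> top_choice P z (mu z).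
Proof.
move=> tops_distinct q_not_top.
have [top top_spec] := fin_all_exists (fun z => slo_max_exists (P_slo z) q).
exists [ffun z => if z == y then q else top z]; last first.
  by rewrite ffunE eqxx; split=> // z zy; rewrite ffunE (negbTE zy); apply: top_spec.
rewrite /is_assignment card_H eqxx andbT; apply/injectiveP => a b; rewrite !ffunE.
case: (eqVneq a y) => [->|ay]; case: (eqVneq b y) => [->|by_] //.
- by move=> qE; case: (q_not_top b); rewrite qE; apply: top_spec.
- by move=> qE; case: (q_not_top a); rewrite -qE; apply: top_spec.
move=> topE; apply/eqP/contraT => ab.
case: (tops_distinct a b (top a) ay by_ ab (top_spec a)).
by rewrite topE; apply: top_spec.
Qed.

Lemma unbeaten_tie_of_shared_top_and_second :
  shared_top_and_second -> exists mu lam, unbeaten_tie R mu lam.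
Proof.
case=> x [y [p [q [[xy top_x top_y tops_distinct] [second_x second_y q_not_top]]]]].
have [mu Amu [muy top_mu]] := assignment_of_tops tops_distinct q_not_top.
have mux : mu x = p by apply: top_choice_uniq (top_mu x xy) top_x.
rewrite -mux in top_y; rewrite -muy in second_x second_y.
have yx : y != x by rewrite eq_sym.
pose lam := swap mu y x.
have top_lam z : z != x -> top_choice P z (lam z).
  move=> zx; rewrite ffunE; case: tpermP => [->//|zE|/eqP zy _].
    by rewrite zE eqxx in zx.
  exact: top_mu zy.
have top_x_lam : top_choice P x (lam y) by rewrite ffunE tpermL; apply: top_mu.
have second_x_lam : second_best P x (lam x) by rewrite ffunE tpermR.
exists mu, lam; split.
- apply/eqP => /(congr1 (fun nu : {ffun 'I_n -> H} => nu y)).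
  by rewrite ffunE tpermL => /(assignment_inj Amu) yE; rewrite yE eqxx in yx.
- by case/andP: (majority_tie_swap Amu xy top_mu top_y).
- by case/andP: (majority_tie_swap Amu xy top_mu top_y).
move=> nu /orP[/(majority_beaters Amu xy top_mu top_y second_y)|].
  by case=> ->; rewrite eqxx ?orbT.
move/(majority_beaters (swap_assignment y x Amu) yx top_lam top_x_lam second_x_lam).
by rewrite swapK; case=> ->; rewrite eqxx ?orbT.
Qed.

Lemma card_TC2 : #|TC P| = 2 <-> shared_top_and_second.
Proof.
apply: (iff_trans (card_top_cycle2 majority_assignment majority_refl majority_total)).
split=> [[mu [lam]]|]; first exact: shared_top_and_second_of_unbeaten_tie.
exact: unbeaten_tie_of_shared_top_and_second.
Qed.

End Profile.

Definition rev_profile n (H : finType) (P : profile n H) : profile n H :=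
  fun x a b => P x b a.

Lemma rev_profile_is_profile n (H : finType) (P : profile n H) :
  is_profile P -> is_profile (rev_profile P).
Proof.
move=> P_slo x; have [irr tr tot] := P_slo x; split=> //.
- by move=> b a c Pab Pbc; apply: tr Pbc Pab.
- by move=> a b /tot; rewrite orbC.
Qed.

Lemma majority_rev_profile n (H : finType) (P : profile n H) :
  majority (rev_profile P) =2 (fun mu nu => majority P nu mu).
Proof.
have N_rev mu nu : N_of (rev_profile P) mu nu = N_of P nu mu.
  by apply/setP => z; rewrite !inE /weakly_prefers eq_sym.
by move=> mu nu; rewrite /majority andbCA !N_rev.
Qed.

Lemma BC_rev_profile n (H : finType) (P : profile n H) :
  BC P = TC (rev_profile P).
Proof.
apply/setP => mu; rewrite !inE; case Amu: (is_assignment mu) => //=.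
apply: eq_forallb => lam; case Alam: (is_assignment lam) => //=.
rewrite /majority_tc !step_connect_refl ?majority_refl //.
by rewrite (eq_connect (majority_rev_profile P)) connect_rev.
Qed.

Theorem lemmaB3 (n : nat) (H : finType) (P : profile n H) :
  #|H| = n -> is_profile P ->
  (#|TC P| = 2 <->
     exists (x y : 'I_n) (p q : H),
       [/\ x != y, top_choice P x p, top_choice P y p &
           (forall (a b : 'I_n) (h : H), a != y -> b != y -> a != b ->
              top_choice P a h -> ~ top_choice P b h)] /\
       [/\ second_best P x q, second_best P y q &
           forall z : 'I_n, ~ top_choice P z q]) /\
  (#|BC P| = 2 <->
     exists (x y : 'I_n) (p q : H),
       [/\ x != y, bottom_choice P x p, bottom_choice P y p &
           (forall (a b : 'I_n) (h : H), a != y -> b != y -> a != b ->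
              bottom_choice P a h -> ~ bottom_choice P b h)] /\
       [/\ second_worst P x q, second_worst P y q &
           forall z : 'I_n, ~ bottom_choice P z q]).
Proof.
move=> card_H P_slo; split; first exact: card_TC2.
by rewrite BC_rev_profile; apply: card_TC2 (rev_profile_is_profile P_slo).
Qed.
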